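(* Let $1\le k\le n$, and consider a storage network with node set $\mathcal{N}$ and RTT function $\tau$. (i) If $\mathcal{C}$ is an uncoded storage scheme that is admissible on some nearest-neighbor graph $\mathcal{G}_{k-1}$, then \[ L_{avg}(\mathcal{C})=\frac{1}{kn}\sum_{i\in\mathcal{N}}\sum_{j=0}^{k-1}\lambda_j^{(i)}. \] (ii) Conversely, if an uncoded storage scheme $\mathcal{C}$ satisfies $L_{max}^{(i)}(\mathcal{C})=\lambda_{k-1}^{(i)}$ for all $i\in\mathcal{N}$ and $L_{avg}(\mathcal{C})=\frac{1}{kn}\sum_{i\in\mathcal{N}}\sum_{j=0}^{k-1}\lambda_j^{(i)}$, then $\mathcal{C}$ is admissible on some nearest-neighbor graph $\mathcal{G}_{k-1}$.
   Context: A storage network consists of $n$ nodes $\mathcal{N}=\{1,\dots,n\}$ and a round-trip-time (RTT) function $\tau:\mathcal{N}\times\mathcal{N}\to\mathbb{R}_{\ge 0}$ with $\tau(i,j)=\tau(j,i)$ and $\tau(i,i)=0$. There are $k\le n$ information files $W_1,\dots,W_k$. An uncoded storage scheme stores at each node $i$ exactly one file, $X_i=W_{\sigma(i)}$, for a map $\sigma:\mathcal{N}\to[k]$ (which must be surjective so that all files are stored). File $W_j$ is decodable from $S\subseteq\mathcal{N}$ iff some $t\in S$ has $\sigma(t)=j$. The latency $l_j^{(i)}=\min\{L\ge0: W_j$ decodable from $\{t:\tau(t,i)\le L\}\}$; $L_{max}^{(i)}(\mathcal{C})=\max_{j\in[k]}l_j^{(i)}$ and $L_{avg}(\mathcal{C})=\frac{1}{kn}\sum_{i\in\mathcal{N}}\sum_{j\in[k]}l_j^{(i)}$.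 For node $i$, $\lambda_0^{(i)}\le\dots\le\lambda_{n-1}^{(i)}$ is the sorted list of $\{\tau(j,i):j\in\mathcal{N}\}$ ($\lambda_0^{(i)}=0$). A nearest-neighbor graph $\mathcal{G}_{k-1}$ is a directed graph on $\mathcal{N}$ in which each node $i$ has incoming edges from exactly $k-1$ other nodes whose RTTs to $i$ are the $k-1$ smallest values $\lambda_1^{(i)},\dots,\lambda_{k-1}^{(i)}$ (ties broken arbitrarily); these are the neighbors of $i$. A scheme is admissible on a directed graph $\mathcal{D}$ on $\mathcal{N}$ if for every node $i$ and every $j\in[k]$, $W_j$ is decodable from $\{i\}$ together with the nodes having an edge into $i$ in $\mathcal{D}$. *)

From HB Require Import structures.
From mathcomp Require Import all_boot all_order all_algebra.
From mathcomp Require Import boolp classical_sets reals.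
Set Implicit Arguments. Unset Strict Implicit. Unset Printing Implicit Defensive.
Import Order.TTheory GRing.Theory Num.Theory.
Local Open Scope ring_scope.
Local Open Scope classical_set_scope.

(* Nodes are 'I_n, files are 'I_k; an uncoded scheme is sigma : 'I_n -> 'I_k
   (node i stores W_(sigma i)); tau : 'I_n -> 'I_n -> R is the RTT function. *)

Definition rtt_ok (R : realType) (n : nat) (tau : 'I_n -> 'I_n -> R) : Prop :=
  (forall i j, 0 <= tau i j) /\ (forall i j, tau i j = tau j i) /\
  (forall i, tau i i = 0).

Definition decodable (n k : nat) (sigma : 'I_n -> 'I_k) (S : set 'I_n) (j : 'I_k) : Prop :=
  exists t, S t /\ sigma t = j.

Definition latency (R : realType) (n k : nat) (tau : 'I_n -> 'I_n -> R)
  (sigma : 'I_n -> 'I_k) (i : 'I_n) (j : 'I_k) : R :=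
  inf [set L : R | 0 <= L /\ decodable sigma [set t | tau t i <= L] j].

Definition Lmax (R : realType) (n k : nat) (tau : 'I_n -> 'I_n -> R)
  (sigma : 'I_n -> 'I_k) (i : 'I_n) : R :=
  \big[Num.max/0]_(j < k) latency tau sigma i j.

Definition Lavg (R : realType) (n k : nat) (tau : 'I_n -> 'I_n -> R)
  (sigma : 'I_n -> 'I_k) : R :=
  (k * n)%:R^-1 * \sum_(i < n) \sum_(j < k) latency tau sigma i j.

Definition lam (R : realType) (n : nat) (tau : 'I_n -> 'I_n -> R) (i : 'I_n) (j : nat) : R :=
  nth 0 (sort <=%R [seq tau t i | t <- enum 'I_n]) j.

(* A directed graph is given by its in-neighbourhoods nbr i (nodes with an
   edge into i). Nearest-neighbour graph G_(k-1). *)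
Definition nn_graph (R : realType) (n k : nat) (tau : 'I_n -> 'I_n -> R)
  (nbr : 'I_n -> {set 'I_n}) : Prop :=
  forall i, i \notin nbr i /\ #|nbr i| = (k - 1)%N /\
    perm_eq [seq tau t i | t <- enum (nbr i)] [seq lam tau i j | j <- iota 1 (k - 1)].

Definition admissible (n k : nat) (sigma : 'I_n -> 'I_k) (nbr : 'I_n -> {set 'I_n}) : Prop :=
  forall i (j : 'I_k), decodable sigma [set t | t \in i |: nbr i] j.
Arguments nn_graph {R n} k tau nbr.

From mathcomp Require Import all_boot all_order all_algebra.
From mathcomp Require Import boolp classical_sets reals.

Set Implicit Arguments.
Unset Strict Implicit.
Unset Printing Implicit Defensive.
Import Order.TTheory GRing.Theory Num.Theory.
Local Open Scope ring_scope.

(* The latency of file j at node i is the distance from i to the nearest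
   replica of j.  These nearest replicas are k distinct nodes (they store
   distinct files), so their distances to i dominate the k smallest distances
   lambda_0, ..., lambda_(k-1) termwise after sorting, and the per-node latency
   sum is at least lambda_0 + ... + lambda_(k-1), with equality only if the
   nearest replicas realise exactly these distances.  On a nearest-neighbour
   graph, admissibility puts a replica of every file among i and its k - 1
   nearest neighbours, which gives the reverse inequality.  Conversely, if the
   average latency meets the bound then every node meets it, and the nearest
   replicas of the files not stored at i form a nearest neighbourhood of i. *)

Lemma eq_from_ler_sum (R : numDomainType) (I : finType) (F G : I -> R) :
  (forall i, F i <= G i) -> \sum_i F i = \sum_i G i -> forall i, F i = G i.
Proof.
move=> le_FG sum_eq i.
have [_ /esym/eqfun_inP] := leif_sum (P := xpredT) (fun i _ => leif_eq (le_FG i)).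
by rewrite sum_eq eqxx; apply.
Qed.

Section SortedPrefix.
Variable R : realDomainType.

Lemma big_nth_sort (a : seq R) :
  \sum_(x <- a) x = \sum_(m < size a) nth 0 (sort <=%R a) m.
Proof.
rewrite -(perm_big _ (permEl (perm_sort <=%R a))) (big_nth 0) size_sort.
by rewrite big_mkord.
Qed.

Variables l a : seq R.
Hypothesis count_dom : forall x, (count (<= x) a <= count (<= x) l)%N.

Lemma nth_sort_le m : (m < size a)%N ->
  nth 0 (sort <=%R l) m <= nth 0 (sort <=%R a) m.
Proof.
move=> m_lt; set x := nth 0 (sort <=%R a) m.
have m_lt_count : (m < count (<= x) (sort <=%R a))%N.
  rewrite ltnNge; apply/negP => count_le_m.
  have := @nth_count_gt _ _ x 0 _ m (sort_le_sorted a).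
  by rewrite count_le_m size_sort m_lt ltxx => /(_ isT).
apply: nth_count_le; first exact: sort_le_sorted.
by rewrite count_sort (leq_trans _ (count_dom x)) // -(count_sort <=%R).
Qed.

Lemma sum_nth_sort_le :
  \sum_(m < size a) nth 0 (sort <=%R l) m <= \sum_(x <- a) x.
Proof. by rewrite big_nth_sort; apply: ler_sum => m _; apply: nth_sort_le. Qed.

Lemma sum_nth_sort_eq_perm :
  \sum_(m < size a) nth 0 (sort <=%R l) m = \sum_(x <- a) x ->
  perm_eq a [seq nth 0 (sort <=%R l) m | m <- iota 0 (size a)].
Proof.
rewrite big_nth_sort => sum_eq.
have nth_eq :=
  eq_from_ler_sum (fun m : 'I_(size a) => nth_sort_le (ltn_ord m)) sum_eq.
suff -> : [seq nth 0 (sort <=%R l) m | m <- iota 0 (size a)] = sort <=%R a.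
  by rewrite perm_sym perm_sort.
apply: (@eq_from_nth _ 0); first by rewrite size_sort size_map size_iota.
move=> m; rewrite size_map size_iota => m_lt.
by rewrite (nth_map 0%N) ?size_iota // nth_iota // (nth_eq (Ordinal m_lt)).
Qed.

End SortedPrefix.

Lemma inf_eq_lbound (R : realType) (E : set R) x : E x -> lbound E x -> inf E = x.
Proof.
move=> Ex x_lb; apply/eqP; rewrite eq_le lb_le_inf ?andbT //; last by exists x.
by apply: ge_inf => //; exists x.
Qed.

Lemma count_map_inj_le (T U : finType) (f : T -> U) (P : pred U) :
  injective f -> (count P [seq f x | x <- enum T] <= count P (enum U))%N.
Proof.
move=> f_inj; rewrite -!size_filter; apply: uniq_leq_size => [|u].
  by rewrite filter_uniq // map_inj_uniq ?enum_uniq.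
by rewrite mem_filter => /andP[Pu _]; rewrite mem_filter Pu mem_enum.
Qed.

Lemma perm_enum_imset (T U : finType) (f : T -> U) (A : {set T}) :
  injective f -> perm_eq (enum (f @: A)) [seq f x | x <- enum A].
Proof.
move=> f_inj; apply: uniq_perm; rewrite ?enum_uniq ?map_inj_uniq ?enum_uniq //.
move=> u; rewrite mem_enum; apply/imsetP/mapP => -[x x_in ->]; exists x => //.
  by rewrite mem_enum.
by rewrite -mem_enum.
Qed.

Lemma perm_enum_setC1 (T : finType) (x : T) :
  perm_eq (enum T) (x :: enum [set~ x]).
Proof.
apply: uniq_perm; rewrite /= ?mem_enum ?inE ?eqxx ?enum_uniq //.
by move=> y; rewrite in_cons !mem_enum !inE; case: eqVneq.
Qed.

Section StorageNetwork.
Variables (R : realType) (n k : nat) (tau : 'I_n -> 'I_n -> R).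
Variable sigma : 'I_n -> 'I_k.
Hypothesis tau_ok : rtt_ok tau.

Lemma latency_le i t : latency tau sigma i (sigma t) <= tau t i.
Proof.
have [tau_ge0 _] := tau_ok.
apply: ge_inf; first by exists 0 => L [].
by split; [exact: tau_ge0 | exists t; split => /=].
Qed.

Lemma latency_attained i j : (exists t, sigma t = j) ->
  exists2 t, sigma t = j & latency tau sigma i j = tau t i.
Proof.
have [tau_ge0 _] := tau_ok.
case=> t0 /eqP t0_j.
have [t /eqP t_j t_min] :=
  @arg_minP _ _ _ t0 [pred t | sigma t == j] (tau^~ i) t0_j.
exists t => //; apply: inf_eq_lbound.
  by split; [exact: tau_ge0 | exists t; split => /=].
by move=> L [_ [t' [t'_L /eqP t'_j]]]; apply: le_trans (t_min _ t'_j) t'_L.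
Qed.

Lemma latency_self i : latency tau sigma i (sigma i) = 0.
Proof.
have [_ [_ tau_ii]] := tau_ok.
apply: inf_eq_lbound; first by split => //; exists i; rewrite /= tau_ii.
by move=> L [].
Qed.

Lemma nearest_replicas : (forall j, exists t, sigma t = j) ->
  exists2 F : 'I_n -> 'I_k -> 'I_n, forall i j, sigma (F i j) = j &
    forall i j, latency tau sigma i j = tau (F i j) i.
Proof.
move=> surj.
have /choice[F F_spec] : forall ij : 'I_n * 'I_k,
    exists t, sigma t = ij.2 /\ latency tau sigma ij.1 ij.2 = tau t ij.1.
  by case=> i j; have [t] := latency_attained i (surj j); exists t.
by exists (fun i j => F (i, j)) => i j; case: (F_spec (i, j)).
Qed.

Lemma lam0 i : lam tau i 0 = 0.
Proof.
have [tau_ge0 [_ tau_ii]] := tau_ok.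
apply/le_anti/andP; split.
  apply: nth_count_le; first exact: sort_le_sorted.
  rewrite count_sort -has_count; apply/hasP; exists (tau i i).
    by apply/mapP; exists i; rewrite ?mem_enum.
  by rewrite /= tau_ii.
have : lam tau i 0 \in sort <=%R [seq tau t i | t <- enum 'I_n].
  rewrite mem_nth // size_sort size_map size_enum_ord.
  exact: leq_ltn_trans (leq0n i) (ltn_ord i).
by rewrite mem_sort => /mapP[t _ ->].
Qed.

Lemma map_lam_iota i m : (0 < m)%N ->
  [seq lam tau i j | j <- iota 0 m] =
  0 :: [seq lam tau i j | j <- iota 1 (m - 1)].
Proof. by case: m => // m _; rewrite subSS subn0 /= lam0. Qed.

Lemma count_dist_le i (f : 'I_k -> 'I_n) : injective f -> forall x,
  (count (<= x) [seq tau (f j) i | j <- enum 'I_k] <=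
   count (<= x) [seq tau t i | t <- enum 'I_n])%N.
Proof.
move=> f_inj x; have := count_map_inj_le (preim (tau^~ i) (<= x)) f_inj.
by rewrite !count_map.
Qed.

Lemma sum_lam_le i (f : 'I_k -> 'I_n) : injective f ->
  \sum_(j < k) lam tau i j <= \sum_(j < k) tau (f j) i.
Proof.
move=> f_inj; have := sum_nth_sort_le (count_dist_le i f_inj).
by rewrite size_map size_enum_ord big_map big_enum.
Qed.

Lemma sum_lam_eq_perm i (f : 'I_k -> 'I_n) : injective f ->
  \sum_(j < k) lam tau i j = \sum_(j < k) tau (f j) i ->
  perm_eq [seq tau (f j) i | j <- enum 'I_k] [seq lam tau i m | m <- iota 0 k].
Proof.
move=> f_inj; have := sum_nth_sort_eq_perm (count_dist_le i f_inj).
by rewrite size_map size_enum_ord big_map big_enum.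
Qed.

Lemma sum_latency_le_nn_graph i (nbr : 'I_n -> {set 'I_n}) :
  nn_graph k tau nbr -> admissible sigma nbr ->
  \sum_(j < k) latency tau sigma i j <= \sum_(j < k) lam tau i j.
Proof.
move=> nn adm; have [_ [_ tau_ii]] := tau_ok.
have k_gt0 : (0 < k)%N := leq_ltn_trans (leq0n _) (ltn_ord (sigma i)).
have [i_nbr [card_nbr perm_nbr]] := nn i.
have /choice[g g_spec] := adm i.
have g_file j : sigma (g j) = j by case: (g_spec j).
have g_inj : injective g by move=> j1 j2 /(congr1 sigma); rewrite !g_file.
have g_onto : g @: [set: 'I_k] = i |: nbr i.
  apply/eqP; rewrite eqEcard card_imset // cardsT card_ord cardsU1 i_nbr card_nbr.
  rewrite add1n subn1 prednK // leqnn andbT.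
  by apply/fintype.subsetP => _ /imsetP[j _ ->]; case: (g_spec j).
apply: (@le_trans _ _ (\sum_(j < k) tau (g j) i)).
  by apply: ler_sum => j _; rewrite -{1}(g_file j) latency_le.
have -> : \sum_(j < k) tau (g j) i = \sum_(t in i |: nbr i) tau t i.
  rewrite -g_onto big_imset /=; last exact: in2W.
  by apply: eq_bigl => j; rewrite inE.
have -> : \sum_(j < k) lam tau i j =
          \sum_(x <- [seq lam tau i m | m <- iota 0 k]) x.
  by rewrite big_map -(big_mkord xpredT) /index_iota subn0.
rewrite big_setU1 //= tau_ii add0r map_lam_iota // big_cons add0r.
by rewrite -(perm_big _ perm_nbr) big_map big_enum.
Qed.

End StorageNetwork.

Section NearestNeighbourhood.
Variables (R : realType) (n k : nat) (tau : 'I_n -> 'I_n -> R).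
Variable sigma : 'I_n -> 'I_k.
Hypothesis tau_ok : rtt_ok tau.
Variable F : 'I_n -> 'I_k -> 'I_n.
Hypothesis F_file : forall i j, sigma (F i j) = j.
Hypothesis F_latency : forall i j, latency tau sigma i j = tau (F i j) i.

Lemma nearest_inj i : injective (F i).
Proof. by move=> j1 j2 /(congr1 sigma); rewrite !F_file. Qed.

Lemma sum_lam_le_latency i :
  \sum_(j < k) lam tau i j <= \sum_(j < k) latency tau sigma i j.
Proof.
rewrite (eq_bigr _ (fun j _ => F_latency i j)).
by apply: sum_lam_le; apply: nearest_inj.
Qed.

Definition nearest_nbr i : {set 'I_n} := F i @: [set~ sigma i].

Lemma nearest_nbr_admissible : admissible sigma nearest_nbr.
Proof.
move=> i j; case: (eqVneq j (sigma i)) => [->|j_ne].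
  by exists i; rewrite /= setU11.
exists (F i j); split => //=; rewrite /nearest_nbr.
by apply/setU1r/imsetP; exists j; rewrite // !inE.
Qed.

Lemma nearest_nbr_nn_graph :
  (forall i, \sum_(j < k) lam tau i j = \sum_(j < k) latency tau sigma i j) ->
  nn_graph k tau nearest_nbr.
Proof.
move=> sum_eq i.
have k_gt0 : (0 < k)%N := leq_ltn_trans (leq0n _) (ltn_ord (sigma i)).
split; [|split].
- apply/imsetP => -[j]; rewrite !inE => j_ne i_eq.
  by move: j_ne; rewrite -[X in X != _](F_file i j) -i_eq eqxx.
- by rewrite card_imset ?cardsC1 ?card_ord ?subn1 //; exact: nearest_inj.
have dist_perm := sum_lam_eq_perm (@nearest_inj i) (etrans (sum_eq i)
  (eq_bigr _ (fun j _ => F_latency i j))).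
rewrite -(perm_cons 0) -map_lam_iota //; apply: perm_trans dist_perm.
rewrite perm_sym; apply: perm_trans (perm_map _ (perm_enum_setC1 (sigma i))) _.
rewrite /= -F_latency latency_self // perm_cons perm_sym.
have := perm_map (tau^~ i) (perm_enum_imset [set~ sigma i] (@nearest_inj i)).
by rewrite -map_comp.
Qed.

End NearestNeighbourhood.

Theorem proposition3 (R : realType) (n k : nat) (tau : 'I_n -> 'I_n -> R)
  (sigma : 'I_n -> 'I_k) :
  (1 <= k)%N -> (k <= n)%N -> rtt_ok tau -> (forall j : 'I_k, exists i, sigma i = j) ->
  ((exists nbr, nn_graph k tau nbr /\ admissible sigma nbr) ->
     Lavg tau sigma = (k * n)%:R^-1 * \sum_(i < n) \sum_(j < k) lam tau i j)
  /\
  ((forall i, Lmax tau sigma i = lam tau i k.-1) ->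
   Lavg tau sigma = (k * n)%:R^-1 * \sum_(i < n) \sum_(j < k) lam tau i j ->
   exists nbr, nn_graph k tau nbr /\ admissible sigma nbr).
Proof.
move=> k_gt0 k_le_n tau_ok surj.
have [F F_file F_latency] := nearest_replicas tau_ok surj.
have lam_le := sum_lam_le_latency F_file F_latency.
split.
  case=> nbr [nn adm]; rewrite /Lavg; congr (_ * _); apply: eq_bigr => i _.
  by apply/le_anti; rewrite lam_le (sum_latency_le_nn_graph tau_ok i nn adm).
have scale_neq0 : ((k * n)%:R : R)^-1 != 0.
  rewrite invr_eq0 pnatr_eq0 muln_eq0 negb_or -!lt0n k_gt0.
  exact: leq_trans k_gt0 k_le_n.
move=> _; rewrite /Lavg => /(mulfI scale_neq0) sum_eq.
exists (nearest_nbr sigma F); split; last exact: nearest_nbr_admissible.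
exact: nearest_nbr_nn_graph (eq_from_ler_sum lam_le (esym sum_eq)).
Qed.
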